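(* Fix a directed edge set $\mathcal{E}$ and a randomized design with $0<\mathbb{E}[z_i]<1$ for all $i$. Suppose the individually weighted linear estimator $\hat{\mathrm{est}}({\bf w},{\bf v})=\sum_i(w_iz_i+v_i(1-z_i))Y_i({\bf z})$ is unbiased for $\mathrm{ATE}$ under the heterogeneous additive network effects model with edge set $\mathcal{E}$, for every choice of real parameters $\alpha,\beta,\{\gamma_{ki}\}_{(k,i)\in\mathcal{E}}$. Then necessarily $w_i=\frac{1}{n\mathbb{E}[z_i]}$ and $v_i=-\frac1{n\mathbb{E}[1-z_i]}$, i.e. $\hat{\mathrm{est}}=\frac1n\sum_i\big(\frac{z_i}{\mathbb{E}[z_i]}-\frac{1-z_i}{\mathbb{E}[1-z_i]}\big)Y_i({\bf z})$, and $z_k$ and $z_i$ are independent for every $(k,i)\in\mathcal{E}$.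
   Context: Population $[n]$; random treatment vector ${\bf z}\in\{0,1\}^n$ drawn from a randomized design. Heterogeneous additive network effects model: $Y_i({\bf z})=\alpha_i+\beta_iz_i+\sum_{k\in[n]}\gamma_{ki}z_k$ with deterministic real parameters, $\gamma_{ki}=0$ unless $(k,i)\in\mathcal{E}$, where $\mathcal{E}$ is a set of ordered pairs $(k,i)$, $k\neq i$. Average (direct) treatment effect: $\mathrm{ATE}=\frac1n\sum_i(Y_i({\bf e}_i)-Y_i({\bf 0}))=\frac1n\sum_i\beta_i$, where ${\bf e}_i$ is the $i$-th standard basis vector. Individually weighted linear estimators have deterministic weights ${\bf w},{\bf v}$ not depending on ${\bf z}$. *)

From HB Require Import structures.
From mathcomp Require Import all_boot all_order all_algebra.
Set Implicit Arguments. Unset Strict Implicit. Unset Printing Implicit Defensive.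
Import Order.TTheory GRing.Theory Num.Theory.
Local Open Scope ring_scope.

Definition assign (n : nat) := {ffun 'I_n -> bool}.

Definition is_design (R : realFieldType) (n : nat) (p : assign n -> R) : Prop :=
  (forall z, 0 <= p z) /\ \sum_(z : assign n) p z = 1.

Definition Ex (R : realFieldType) (n : nat) (p : assign n -> R) (f : assign n -> R) : R :=
  \sum_(z : assign n) p z * f z.

Definition zr (R : realFieldType) (n : nat) (z : assign n) (i : 'I_n) : R := (z i)%:R.

Definition Yout (R : realFieldType) (n : nat) (alpha beta : 'I_n -> R)
  (gamma : 'I_n -> 'I_n -> R) (z : assign n) (i : 'I_n) : R :=
  alpha i + beta i * zr R z i + \sum_(k < n) gamma k i * zr R z k.

Definition ATE (R : realFieldType) (n : nat) (alpha beta : 'I_n -> R)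
  (gamma : 'I_n -> 'I_n -> R) : R :=
  n%:R^-1 * \sum_(i < n)
    (Yout alpha beta gamma [ffun j => j == i] i - Yout alpha beta gamma [ffun _ => false] i).

Definition est (R : realFieldType) (n : nat) (w v : 'I_n -> R) (alpha beta : 'I_n -> R)
  (gamma : 'I_n -> 'I_n -> R) (z : assign n) : R :=
  \sum_(i < n) (w i * zr R z i + v i * (1 - zr R z i)) * Yout alpha beta gamma z i.

Definition indep2 (R : realFieldType) (n : nat) (p : assign n -> R) (k i : 'I_n) : Prop :=
  forall a b : bool,
    Ex p (fun z => ((z k == a) && (z i == b))%:R) =
    Ex p (fun z => (z k == a)%:R) * Ex p (fun z => (z i == b)%:R).

(* Unbiasedness is linear in the potential outcomes, so it suffices to test it
   on outcomes concentrated on a single unit i.  An intercept at i, a direct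
   effect at i and an interference effect of k on i respectively force
   w_i E[z_i] + v_i E[1 - z_i] = 0,  w_i E[z_i] = 1/n  and
   w_i E[z_i z_k] + v_i E[(1 - z_i) z_k] = 0.  The first two determine the
   weights; substituting w_i E[z_i] = 1/n = - v_i E[1 - z_i] into the third
   gives E[z_i z_k] = E[z_i] E[z_k], which for two binary variables is
   independence. *)
From HB Require Import structures.
From mathcomp Require Import all_boot all_order all_algebra.
From mathcomp Require Import ring.
Import Order.TTheory GRing.Theory Num.Theory.
Set Implicit Arguments. Unset Strict Implicit.
Local Open Scope ring_scope.

Section Expectation.
Variables (R : realFieldType) (n : nat) (p : assign n -> R).

Lemma eq_Ex f g : f =1 g -> Ex p f = Ex p g.
Proof. by move=> fg; apply: eq_bigr => z _; rewrite fg. Qed.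

Lemma ExD f g : Ex p (fun z => f z + g z) = Ex p f + Ex p g.
Proof. by rewrite /Ex -big_split; apply: eq_bigr => z _; rewrite mulrDr. Qed.

Lemma ExB f g : Ex p (fun z => f z - g z) = Ex p f - Ex p g.
Proof. by rewrite /Ex -sumrB; apply: eq_bigr => z _; rewrite mulrBr. Qed.

Lemma ExZ c f : Ex p (fun z => c * f z) = c * Ex p f.
Proof. by rewrite /Ex mulr_sumr; apply: eq_bigr => z _; rewrite mulrCA. Qed.

Lemma Ex_cst c : \sum_z p z = 1 -> Ex p (fun=> c) = c.
Proof. by move=> p1; rewrite /Ex -mulr_suml p1 mul1r. Qed.

Lemma Ex_mul_affine f g c s d t : \sum_z p z = 1 ->
  Ex p (fun z => f z * g z) = Ex p f * Ex p g ->
  Ex p (fun z => (c + s * f z) * (d + t * g z)) =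
    Ex p (fun z => c + s * f z) * Ex p (fun z => d + t * g z).
Proof.
move=> p1 Efg; rewrite !ExD !ExZ !Ex_cst //.
rewrite (eq_Ex (g := fun z =>
  c * d + (s * d * f z + (c * t * g z + s * t * (f z * g z))))); last first.
  by move=> z; ring.
by rewrite !ExD !ExZ Ex_cst // Efg; ring.
Qed.

End Expectation.

Arguments eq_Ex {R n p f g}.

Section Indicators.
Variables (R : realFieldType) (n : nat).

Lemma indicator_eqb (z : assign n) i b :
  (z i == b)%:R = (~~ b)%:R + (if b then 1 else -1) * zr R z i :> R.
Proof. by rewrite /zr; case: b; case: (z i) => /=; ring. Qed.

Lemma sum_delta (F : 'I_n -> R) i0 : \sum_j (j == i0)%:R * F j = F i0.
Proof.
rewrite (bigD1 i0) //= eqxx mul1r big1 ?addr0 // => j /negbTE ->.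
by rewrite mul0r.
Qed.

(* For binary variables, vanishing covariance already gives independence:
   each indicator [z_i == b] is an affine function of z_i. *)
Lemma indep2_of_Ex_mul (p : assign n -> R) k i :
  \sum_z p z = 1 ->
  Ex p (fun z => zr R z k * zr R z i) =
    Ex p (fun z => zr R z k) * Ex p (fun z => zr R z i) ->
  indep2 p k i.
Proof.
move=> p1 Ekl a b.
rewrite (eq_Ex (fun z => indicator_eqb z k a)).
rewrite (eq_Ex (fun z => indicator_eqb z i b)).
rewrite -Ex_mul_affine //; apply: eq_Ex => z.
by rewrite -mulnb natrM !indicator_eqb.
Qed.

End Indicators.

Definition est_weight (R : realFieldType) (n : nat) (w v : 'I_n -> R)
  (z : assign n) (i : 'I_n) : R :=
  w i * zr R z i + v i * (1 - zr R z i).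

Section UnitOutcomes.
Variables (R : realFieldType) (n : nat) (i0 : 'I_n).
Variables (a b : R) (c : 'I_n -> R).

(* Outcomes vanishing off unit i0, with Y_i0(z) = a + b z_i0 + sum_k c_k z_k. *)
Let alpha (j : 'I_n) : R := (j == i0)%:R * a.
Let beta (j : 'I_n) : R := (j == i0)%:R * b.
Let gamma (k j : 'I_n) : R := (j == i0)%:R * c k.

Lemma ATE_unit : ATE alpha beta gamma = n%:R^-1 * (b + c i0).
Proof.
congr (_ * _); rewrite -(sum_delta (fun j => b + c j)).
apply: eq_bigr => j _; rewrite /Yout /zr ffunE eqxx /= mulr1.
under eq_bigr => k _ do rewrite ffunE.
rewrite (eq_bigr (fun k => (k == j)%:R * gamma k j)); last first.
  by move=> k _; rewrite mulrC.
rewrite sum_delta big1 => [|k _]; last by rewrite ffunE mulr0.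
by rewrite /alpha /beta /gamma ffunE /=; ring.
Qed.

Lemma est_unit w v z :
  est w v alpha beta gamma z =
  est_weight w v z i0 * (a + b * zr R z i0 + \sum_k c k * zr R z k).
Proof.
rewrite /est (bigD1 i0) //= big1 ?addr0 => [|j /negbTE ji0].
  rewrite /Yout /alpha /beta /gamma eqxx /= mulr1n !mul1r.
  by under eq_bigr => k _ do rewrite mul1r.
rewrite /Yout /alpha /beta /gamma ji0 !mul0r add0r big1 ?addr0 ?mulr0 //.
by move=> k _; rewrite /= mulr0n !mul0r.
Qed.

End UnitOutcomes.

Section UnbiasedEstimator.
Variables (R : realFieldType) (n : nat) (E : {set 'I_n * 'I_n}).
Variables (p : assign n -> R) (w v : 'I_n -> R).
Hypothesis unbiased :
  forall (alpha beta : 'I_n -> R) (gamma : 'I_n -> 'I_n -> R),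
  (forall k i, (k, i) \notin E -> gamma k i = 0) ->
  Ex p (est w v alpha beta gamma) = ATE alpha beta gamma.

Lemma unbiased_unit i0 a b c :
  (forall k, (k, i0) \notin E -> c k = 0) ->
  Ex p (fun z =>
    est_weight w v z i0 * (a + b * zr R z i0 + \sum_k c k * zr R z k)) =
  n%:R^-1 * (b + c i0).
Proof.
move=> cE; rewrite -(ATE_unit i0 a) -unbiased; first exact/esym/eq_Ex/est_unit.
move=> k j; have [-> /cE ->|_ _] := eqVneq j i0; first by rewrite mulr0.
by rewrite mulr0n mul0r.
Qed.

Lemma unbiased_intercept i :
  w i * Ex p (fun z => zr R z i) + v i * Ex p (fun z => 1 - zr R z i) = 0.
Proof.
have := unbiased_unit (i0 := i) (c := fun=> 0) 1 0 (fun _ _ => erefl).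
rewrite addr0 mulr0 -!ExZ -ExD => <-; apply: eq_Ex => z.
by rewrite mul0r addr0 big1 ?addr0 ?mulr1 // => k _; rewrite mul0r.
Qed.

Lemma unbiased_direct i : w i * Ex p (fun z => zr R z i) = n%:R^-1.
Proof.
have := unbiased_unit (i0 := i) (c := fun=> 0) 0 1 (fun _ _ => erefl).
rewrite addr0 mulr1 -ExZ => <-; apply: eq_Ex => z.
rewrite add0r mul1r big1 => [|k _]; last by rewrite mul0r.
by rewrite addr0 /est_weight /zr; case: (z i) => /=; ring.
Qed.

Lemma unbiased_control i :
  v i * Ex p (fun z => 1 - zr R z i) = - n%:R^-1.
Proof.
rewrite -(unbiased_direct i); apply/eqP.
by rewrite -addr_eq0 addrC unbiased_intercept.
Qed.

Lemma unbiased_interference k i : (k, i) \in E -> k != i ->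
  w i * Ex p (fun z => zr R z k * zr R z i)
    + v i * (Ex p (fun z => zr R z k) - Ex p (fun z => zr R z k * zr R z i))
  = 0.
Proof.
move=> kiE ki.
have cE j : (j, i) \notin E -> (j == k)%:R = 0 :> R.
  by case: eqP => [-> | _]; rewrite ?kiE.
have := unbiased_unit (c := fun j => (j == k)%:R) 0 0 cE.
rewrite add0r eq_sym (negbTE ki) mulr0 -ExB -!ExZ -ExD => <-; apply: eq_Ex => z.
by rewrite sum_delta mul0r !add0r /est_weight; ring.
Qed.

End UnbiasedEstimator.

Lemma mul_eq_inv (F : fieldType) (x q N : F) :
  q != 0 -> x * q = N^-1 -> x = (N * q)^-1.
Proof. by move=> q0 xq; rewrite invfM -xq mulfK. Qed.

(* Multiplying the interference equation by q (1 - q) turns it into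
   N^-1 ((1 - q) a - q (qk - a)) = N^-1 (a - q qk). *)
Lemma moment_factorizes (F : fieldType) (N q qk a w v : F) : N != 0 ->
  w * q = N^-1 -> v * (1 - q) = - N^-1 -> w * a + v * (qk - a) = 0 ->
  a = q * qk.
Proof.
move=> N0 wq vq interf; apply/eqP; rewrite -subr_eq0.
have : N^-1 * (a - q * qk) = 0.
  rewrite -[RHS](mulr0 (q * (1 - q))) -interf.
  transitivity ((w * q) * ((1 - q) * a) + (v * (1 - q)) * (q * (qk - a)));
    last by ring.
  by rewrite wq vq; ring.
by move/eqP; rewrite mulf_eq0 invr_eq0 (negbTE N0).
Qed.

Theorem theorem3 (R : realFieldType) (n : nat) (E : {set 'I_n * 'I_n})
  (p : assign n -> R) (w v : 'I_n -> R) :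
  (forall k i, (k, i) \in E -> k != i) ->
  is_design p ->
  (forall i, 0 < Ex p (fun z => zr R z i) < 1) ->
  (forall (alpha beta : 'I_n -> R) (gamma : 'I_n -> 'I_n -> R),
     (forall k i, (k, i) \notin E -> gamma k i = 0) ->
     Ex p (est w v alpha beta gamma) = ATE alpha beta gamma) ->
  (forall i, w i = (n%:R * Ex p (fun z => zr R z i))^-1 /\
             v i = - (n%:R * Ex p (fun z => 1 - zr R z i))^-1) /\
  (forall k i, (k, i) \in E -> indep2 p k i).
Proof.
move=> irrE [_ p1] pi01 unbiased.
have Ex_compl i : Ex p (fun z => 1 - zr R z i) = 1 - Ex p (fun z => zr R z i).
  by rewrite ExB Ex_cst.
have direct := unbiased_direct unbiased.
have control := unbiased_control unbiased.
split=> [i | k i kiE].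
  have /andP[pi_gt0 pi_lt1] := pi01 i.
  split; first by apply: (@mul_eq_inv R); rewrite ?gt_eqF.
  apply: oppr_inj; rewrite opprK; apply: (@mul_eq_inv R).
    by rewrite Ex_compl subr_eq0 gt_eqF.
  by rewrite mulNr control opprK.
apply: indep2_of_Ex_mul => //; rewrite mulrC.
have n_neq0 : n%:R != 0 :> R.
  by rewrite pnatr_eq0 -lt0n (leq_ltn_trans _ (ltn_ord k)).
have interf := unbiased_interference unbiased kiE (irrE _ _ kiE).
apply: (moment_factorizes n_neq0 (direct i) _ interf).
by rewrite -Ex_compl control.
Qed.
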